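(* Consider a smooth and decomposable probabilistic circuit defining $p(\mathbf{y}\mid\mathcal{Q},\mathcal{X})$ for every forecasting query $\mathcal{Q}$ and observation set $\mathcal{X}$, such that: (1) each leaf node is a distribution over exactly the variables $\mathbf{y}_c$ of the queries belonging to a single input channel $c$; (2) each leaf distribution over $\mathbf{y}_c$ depends on the query only through the subset $\mathcal{Q}_c$ of queries belonging to channel $c$ (and on $\mathcal{X}$); (3) the weights of the sum nodes do not depend on the query $\mathcal{Q}$ (they may depend on $\mathcal{X}$). Then for every channel $c$, $$\int p(\mathbf{y}\mid\mathcal{Q},\mathcal{X})\,d\mathbf{y}_c=p(\mathbf{y}_{-c}\mid\mathcal{Q}_{-c},\mathcal{X}),$$ where $\mathbf{y}_{-c}=\mathbf{y}\setminus\mathbf{y}_c$ and $\mathcal{Q}_{-c}=\mathcal{Q}\setminus\mathcal{Q}_c$; i.e. the circuit is marginalization consistent up to the leaf nodes (with respect to removing whole channels).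
   Context: Observations $\mathcal{X}=((t_n,c_n,y_n))_{n=1}^N$ with $(t_n,c_n,y_n)\in\mathbb{R}\times\{1,\dots,C\}\times\mathbb{R}$; a query $\mathcal{Q}=((t_m^{\mathrm{qry}},c_m^{\mathrm{qry}}))_{m}$ with targets $\mathbf{y}$. For channel $c$, $\mathcal{Q}_c$ denotes the queries with channel index $c$ and $\mathbf{y}_c$ the corresponding targets; the sets $\mathbf{y}_c$ partition $\mathbf{y}$. A probabilistic circuit is a rooted DAG with leaf nodes (normalized densities over a subset of variables, its scope), sum nodes computing $\sum_{k\in ch(n)}w_{n,k}p_k$ with $w_{n,k}\ge 0$, $\sum_k w_{n,k}=1$, and product nodes computing $\prod_{k\in ch(n)}p_k$; the scope of an inner node is the union of its children's scopes. Smoothness: all children of a sum node have the same scope. Decomposability: children of a product node have pairwise disjoint scopes. The circuit structure is fixed and does not depend on $\mathcal{Q}$; when $\mathcal{Q}_c$ is empty the leaves of channel $c$ are the constant $1$. *)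

From Stdlib Require List.
From HB Require Import structures.
From mathcomp Require Import all_boot all_order all_algebra.
From mathcomp Require Import all_classical all_reals all_analysis.
Set Implicit Arguments. Unset Strict Implicit. Unset Printing Implicit Defensive.
Import Order.TTheory GRing.Theory Num.Theory.
Local Open Scope ring_scope.

Section PC.
Variables (R : realType) (C : nat).

(* observations X = ((t_n, c_n, y_n))_n, channels {1..C} rendered as 'I_C *)
Definition obs := seq (R * 'I_C * R).
Definition query := seq (R * 'I_C).

Definition qchan (Q : query) (c : 'I_C) : query := [seq q <- Q | q.2 == c].
Definition qrest (Q : query) (c : 'I_C) : query := [seq q <- Q | q.2 != c].

(* y_c : the targets (in query order) of the queries of channel c;
   y is a sequence of targets aligned with Q *)
Definition yvals (Q : query) (y : seq R) (c : 'I_C) : seq R :=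
  [seq p.2 | p <- zip Q y & p.1.2 == c].

(* A probabilistic circuit whose structure is fixed (independent of Q).
   - a leaf carries a single channel c (its scope is y_c) and a family of
     functions  f X ts yc  = density of y_c given X and Q_c, where Q_c is
     given through its sequence of query times ts (all its channels are c);
   - a sum node carries its children with weights w X depending only on X;
   - a product node carries its children. *)
Inductive pc : Type :=
| PLeaf of 'I_C & (obs -> seq R -> seq R -> R)
| PSum of seq ((obs -> R) * pc)
| PProd of seq pc.

Fixpoint pc_eval (X : obs) (Q : query) (y : seq R) (n : pc) {struct n} : R :=
  match n with
  | PLeaf c f => f X [seq q.1 | q <- qchan Q c] (yvals Q y c)
  | PSum ch => (fix go (l : seq ((obs -> R) * pc)) : R :=
                  match l with
                  | [::] => 0
                  | (w, k) :: l' => w X * pc_eval X Q y k + go l'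
                  end) ch
  | PProd ch => (fix go (l : seq pc) : R :=
                   match l with
                   | [::] => 1
                   | k :: l' => pc_eval X Q y k * go l'
                   end) ch
  end.

(* scope, as a set of channels (the variable scope for a query Q is the
   union of the y_c for c in this set) *)
Fixpoint scope (n : pc) : {set 'I_C} :=
  match n with
  | PLeaf c _ => [set c]
  | PSum ch => (fix go (l : seq ((obs -> R) * pc)) : {set 'I_C} :=
                  match l with
                  | [::] => finset.set0
                  | (_, k) :: l' => scope k :|: go l'
                  end) ch
  | PProd ch => (fix go (l : seq pc) : {set 'I_C} :=
                   match l with
                   | [::] => finset.set0
                   | k :: l' => scope k :|: go l'
                   end) ch
  end.

Fixpoint all_nodes (P : pc -> Prop) (n : pc) {struct n} : Prop :=
  P n /\
  match n with
  | PLeaf _ _ => True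
  | PSum ch => (fix go (l : seq ((obs -> R) * pc)) : Prop :=
                  match l with
                  | [::] => True
                  | (_, k) :: l' => all_nodes P k /\ go l'
                  end) ch
  | PProd ch => (fix go (l : seq pc) : Prop :=
                   match l with
                   | [::] => True
                   | k :: l' => all_nodes P k /\ go l'
                   end) ch
  end.

Definition smooth : pc -> Prop := all_nodes (fun n =>
  match n with
  | PSum ch => forall k1 k2, List.In k1 (map snd ch) -> List.In k2 (map snd ch) ->
                 scope k1 = scope k2
  | _ => True
  end).

Definition decomposable : pc -> Prop := all_nodes (fun n =>
  match n with
  | PProd ch => forall (i j : nat) (k1 k2 : pc), i <> j ->
                 List.nth_error ch i = Some k1 -> List.nth_error ch j = Some k2 ->
                 [disjoint scope k1 & scope k2]
  | _ => True
  end).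

Fixpoint iint (n : nat) : (n.-tuple R -> \bar R) -> \bar R :=
  match n return (n.-tuple R -> \bar R) -> \bar R with
  | 0 => fun f => f [tuple]
  | n'.+1 => fun f =>
      (\int[@lebesgue_measure R]_x iint (fun t : n'.-tuple R => f [tuple of x :: t]))%E
  end.

(* Every leaf is a normalized density over its variables y_c, for every X and
   every Q_c (given by its times ts); for ts = [::] this forces the value 1. *)
Definition leaves_are_densities : pc -> Prop := all_nodes (fun n =>
  match n with
  | PLeaf _ f => forall (X : obs) (ts : seq R),
      (forall v : (size ts).-tuple R, 0 <= f X ts v) /\
      measurable_fun [set: (size ts).-tuple R] (fun v : (size ts).-tuple R => f X ts v) /\
      iint (fun v : (size ts).-tuple R => (f X ts v)%:E) = 1%E
  | _ => True
  end).

Definition sum_weights_valid : pc -> Prop := all_nodes (fun n =>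
  match n with
  | PSum ch => forall X : obs,
      (forall wk, List.In wk ch -> 0 <= wk.1 X) /\ \sum_(wk <- ch) wk.1 X = 1
  | _ => True
  end).

(* rebuild y (aligned with Q) from y_c (in order) and y_{-c} (in order) *)
Fixpoint ymerge (c : 'I_C) (Q : query) (yc ys : seq R) : seq R :=
  match Q with
  | [::] => [::]
  | q :: Q' => if q.2 == c then head 0 yc :: ymerge c Q' (behead yc) ys
               else head 0 ys :: ymerge c Q' yc (behead ys)
  end.

End PC.

From HB Require Import structures.
From mathcomp Require Import all_boot all_order all_algebra.
From mathcomp Require Import all_classical all_reals all_analysis.
From mathcomp Require Import measurable_realfun.
Import Order.TTheory GRing.Theory Num.Theory.
Local Open Scope ring_scope.

(* Each node is evaluated twice: on the full query Q, with the targets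
   assembled from y_c and y_{-c}, and on the reduced query Q_{-c}, with
   y_{-c}.  By structural induction, either c is outside the scope of the
   node and the two values coincide for every y_c, or c is in its scope and
   integrating the first value over y_c gives the second.  Leaves of channel
   c are normalised densities, and equal 1 on the empty query that Q_{-c}
   gives them; leaves of other channels see the same queries and targets in
   both evaluations.  Smoothness puts all children of a sum node in the same
   case, and the integral is linear since the weights do not depend on the
   query.  Decomposability leaves at most one child of a product node with c
   in its scope; the others are constant in y_c and factor out. *)

Section IteratedIntegral.
Context {R : realType}.
Local Open Scope ereal_scope.

Lemma iint_ge0 n (f : n.-tuple R -> \bar R) : (forall v, 0 <= f v) -> 0 <= iint f.
Proof.
elim: n f => [|n IH] f f0 /=; first exact: f0.
by apply: integral_ge0 => x _; apply: IH.
Qed.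

(* The parameter [x] ranges over an arbitrary measurable space so that the
   induction on [n] can absorb the first coordinate into it. *)
Lemma measurable_iint n d (T : measurableType d) (h : T * n.-tuple R -> \bar R) :
  measurable_fun setT h -> (forall z, 0 <= h z) ->
  measurable_fun setT (fun x => iint (fun t => h (x, t))).
Proof.
elim: n d T h => [|n IH] d T h mh h0 /=.
  by apply: measurableT_comp => //; exact: measurable_fun_pair.
pose h' (w : (T * R) * n.-tuple R) := h (w.1.1, [tuple of w.1.2 :: w.2]).
have mh' : measurable_fun setT h'.
  apply: measurableT_comp => //; apply: measurable_fun_pair.
    exact: measurableT_comp.
  by apply: measurable_cons => //; exact: measurableT_comp.
have := measurable_fun_fubini_tonelli_F (m2 := @lebesgue_measure R) _
  (IH _ _ h' mh' (fun z => h0 _)).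
by apply=> z; apply: iint_ge0 => v; exact: h0.
Qed.

Lemma measurable_iint_cons n (f : n.+1.-tuple R -> \bar R) :
  measurable_fun setT f -> (forall v, 0 <= f v) ->
  measurable_fun setT (fun x : R => iint (fun t : n.-tuple R => f [tuple of x :: t])).
Proof.
move=> mf f0; apply: (@measurable_iint n _ R (fun z => f [tuple of z.1 :: z.2])) => //.
by apply: measurableT_comp => //; exact: measurable_cons.
Qed.

Lemma measurable_cons_section n (f : n.+1.-tuple R -> \bar R) (x : R) :
  measurable_fun setT f -> measurable_fun setT (fun t : n.-tuple R => f [tuple of x :: t]).
Proof. by move=> mf; apply: measurableT_comp => //; exact: measurable_cons. Qed.

Lemma iint0 n : iint (fun _ : n.-tuple R => 0) = 0.
Proof.
elim: n => [|n IH] //=.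
by under eq_integral do rewrite IH; exact: integral0.
Qed.

Lemma ge0_iintD n (f g : n.-tuple R -> \bar R) :
  measurable_fun setT f -> measurable_fun setT g ->
  (forall v, 0 <= f v) -> (forall v, 0 <= g v) ->
  iint (fun v => f v + g v) = iint f + iint g.
Proof.
elim: n f g => [|n IH] f g mf mg f0 g0 //=.
transitivity (\int[@lebesgue_measure R]_x
    (iint (fun t => f [tuple of x :: t]) + iint (fun t => g [tuple of x :: t]))).
  by apply: eq_integral => x _; apply: IH => //; exact: measurable_cons_section.
by apply: ge0_integralD => //;
  first [exact: measurable_iint_cons | move=> x _; exact: iint_ge0].
Qed.

Lemma ge0_iintZl n (k : R) (f : n.-tuple R -> \bar R) : (0 <= k)%R ->
  measurable_fun setT f -> (forall v, 0 <= f v) ->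
  iint (fun v => k%:E * f v) = k%:E * iint f.
Proof.
elim: n f => [|n IH] f k0 mf f0 //=.
transitivity (\int[@lebesgue_measure R]_x (k%:E * iint (fun t => f [tuple of x :: t]))).
  by apply: eq_integral => x _; apply: IH => //; exact: measurable_cons_section.
apply: ge0_integralZl_EFin => //; last exact: measurable_iint_cons.
by move=> x _; apply: iint_ge0.
Qed.

End IteratedIntegral.

Section IntegratesTo.
Context {R : realType} {n : nat}.

Definition integrates_to (f : n.-tuple R -> R) (a : R) : Prop :=
  (forall v, 0 <= f v) /\ measurable_fun setT f /\ iint (fun v => (f v)%:E) = a%:E.

Lemma integrates_to0 : integrates_to (fun=> 0) 0.
Proof. by split; [|split; [exact: measurable_cst | exact: iint0]]. Qed.

Lemma integrates_toD (w : R) f g a b : 0 <= w ->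
  integrates_to f a -> integrates_to g b ->
  integrates_to (fun v => w * f v + g v) (w * a + b).
Proof.
move=> w0 [f0 [mf ia]] [g0 [mg ib]]; have wf0 v : 0 <= w * f v by rewrite mulr_ge0.
have mwf : measurable_fun setT (fun v => w * f v).
  by apply: measurable_funM => //; exact: measurable_cst.
split; first by move=> v; rewrite addr_ge0.
split; first exact: measurable_funD.
under eq_fun do rewrite EFinD.
rewrite ge0_iintD; try exact/measurable_EFinP; try by move=> v; rewrite lee_fin.
under eq_fun do rewrite EFinM.
by rewrite ge0_iintZl ?ia ?ib //; exact/measurable_EFinP.
Qed.

Lemma integrates_toMl (a : R) f b : 0 <= a -> integrates_to f b ->
  integrates_to (fun v => a * f v) (a * b).
Proof.
move=> a0 ifb; rewrite -[a * b]addr0.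
under eq_fun do rewrite -[a * _]addr0.
exact: integrates_toD integrates_to0.
Qed.

Lemma integrates_toMr (a : R) f b : 0 <= a -> integrates_to f b ->
  integrates_to (fun v => f v * a) (b * a).
Proof.
by move=> a0 ifb; rewrite mulrC; under eq_fun do rewrite mulrC; exact: integrates_toMl.
Qed.

End IntegratesTo.

Lemma integrates_to_cast (R : realType) m n (g : seq R -> R) (a : R) : m = n ->
  integrates_to (fun v : m.-tuple R => g v) a -> integrates_to (fun v : n.-tuple R => g v) a.
Proof. by move=> e; case: n / e. Qed.

Section CircuitStructure.
Context {R : realType} {C : nat}.
Local Notation pc := (pc R C).

Lemma pc_nested_ind (P : pc -> Prop) :
  (forall c f, P (PLeaf c f)) ->
  (forall ch, (forall wk, List.In wk ch -> P wk.2) -> P (PSum ch)) ->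
  (forall ch, (forall k, List.In k ch -> P k) -> P (PProd ch)) ->
  forall n, P n.
Proof.
move=> PL PS PP; fix IH 1; case=> [c f|ch|ch].
- exact: PL.
- apply: PS; elim: ch => [|[w k] ch IHch] wk /=; first by case.
  by case=> [<-|/IHch]; first exact: IH.
- apply: PP; elim: ch => [|k ch IHch] k' /=; first by case.
  by case=> [<-|/IHch]; first exact: IH.
Qed.

Lemma all_nodes_PSum (P : pc -> Prop) ch : all_nodes P (PSum ch) ->
  P (PSum ch) /\ forall wk, List.In wk ch -> all_nodes P wk.2.
Proof.
case=> PS Pch; split=> //.
by elim: ch {PS} Pch => [|[w k] ch IHch] //= [Pk Pch] wk [<-|/IHch]; last exact.
Qed.

Lemma all_nodes_PProd (P : pc -> Prop) ch : all_nodes P (PProd ch) ->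
  P (PProd ch) /\ forall k, List.In k ch -> all_nodes P k.
Proof.
case=> PP Pch; split=> //.
by elim: ch {PP} Pch => [|k ch IHch] //= [Pk Pch] k' [<-|/IHch]; last exact.
Qed.

Lemma scope_PSumP (c : 'I_C) (ch : seq ((obs R C -> R) * pc)) :
  reflect (exists2 wk, List.In wk ch & c \in scope wk.2) (c \in scope (PSum ch)).
Proof.
apply: (iffP idP).
  elim: ch => [|[w k] ch IHch] /=; first by rewrite inE.
  rewrite finset.in_setU => /orP[ck | /IHch[wk ? ?]]; first by exists (w, k); [left|].
  by exists wk; [right|].
case=> wk; elim: ch => [|[w k] ch IHch] //= [<-|?] cwk; rewrite finset.in_setU.
  by rewrite cwk.
by rewrite IHch ?orbT.
Qed.

Lemma scope_PProdP (c : 'I_C) (ch : seq pc) :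
  reflect (exists2 k, List.In k ch & c \in scope k) (c \in scope (PProd ch)).
Proof.
apply: (iffP idP).
  elim: ch => [|k ch IHch] /=; first by rewrite inE.
  rewrite finset.in_setU => /orP[ck | /IHch[k' ? ?]]; first by exists k; [left|].
  by exists k'; [right|].
case=> k'; elim: ch => [|k ch IHch] //= [<-|?] ck'; rewrite finset.in_setU.
  by rewrite ck'.
by rewrite IHch ?orbT.
Qed.

End CircuitStructure.

Section QuerySplitting.
Context {R : realType} {C : nat}.
Implicit Types (Q : query R C) (c : 'I_C) (y : seq R).

Lemma qchan_qrest Q c : qchan (qrest Q c) c = [::].
Proof.
rewrite /qchan /qrest -filter_predI (eq_filter (a2 := pred0)) ?filter_pred0 //.
by move=> q /=; rewrite andbN.
Qed.

Lemma qchan_qrest_neq Q c c' : c' != c -> qchan (qrest Q c) c' = qchan Q c'.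
Proof.
move=> c'c; rewrite /qchan /qrest -filter_predI; apply: eq_filter => q /=.
by case: eqP => // ->.
Qed.

Lemma size_yvals Q y c : size y = size Q -> size (yvals Q y c) = size (qchan Q c).
Proof.
rewrite /yvals /qchan; elim: Q y => [|q Q IH] [|b y] //= [sy].
by case: ifP => _ /=; rewrite IH.
Qed.

Lemma yvals_qrest Q y c : yvals (qrest Q c) y c = [::].
Proof.
rewrite /yvals /qrest; elim: Q y => [|[t d] Q IH] y /=; first by case: y.
case: (eqVneq d c) => [->|dc] /=; first exact: IH.
by case: y => [|b y] //=; rewrite (negbTE dc).
Qed.

Lemma yvals_ymerge Q c yc ys : size yc = size (qchan Q c) ->
  yvals Q (ymerge c Q yc ys) c = yc.
Proof.
rewrite /yvals /qchan; elim: Q yc ys => [|q Q IH] yc ys /=; first by case: yc.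
case: ifP => qc /=; last by rewrite qc; exact: IH.
by case: yc => [|b yc] //= [syc]; rewrite qc /= IH.
Qed.

Lemma yvals_ymerge_neq Q c c' yc ys : c' != c -> size ys = size (qrest Q c) ->
  yvals Q (ymerge c Q yc ys) c' = yvals (qrest Q c) ys c'.
Proof.
rewrite /yvals /qrest => c'c; elim: Q yc ys => [|[t d] Q IH] yc ys /=; first by case: ys.
case: (eqVneq d c) => [->|dc] /=.
  by rewrite eq_sym (negbTE c'c); exact: IH.
by case: ys => [|b ys] //= [sys]; case: ifP => _ /=; rewrite IH.
Qed.

End QuerySplitting.

Section Marginalization.
Context {R : realType} {C : nat}.
Variables (X : obs R C) (Q : query R C) (c : 'I_C) (ymc : seq R).
Hypothesis size_ymc : size ymc = size (qrest Q c).

Definition joint (n : pc R C) (yc : (size (qchan Q c)).-tuple R) : R :=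
  pc_eval X Q (ymerge c Q yc ymc) n.

Definition marginal (n : pc R C) : R := pc_eval X (qrest Q c) ymc n.

Definition ignores_channel (n : pc R C) : Prop :=
  0 <= marginal n /\ joint n =1 fun=> marginal n.

Definition marginalizes (n : pc R C) : Prop :=
  if c \in scope n then integrates_to (joint n) (marginal n) else ignores_channel n.

Lemma marginalizes_leaf d f : leaves_are_densities (PLeaf d f) -> marginalizes (PLeaf d f).
Proof.
case=> dens _; rewrite /marginalizes /= inE.
have [->|dc] := eqVneq d c.
  set ts := [seq q.1 | q <- qchan Q c].
  have -> : joint (PLeaf c f) = fun yc => f X ts yc.
    by apply: funext => yc; rewrite /joint /= yvals_ymerge // size_tuple.
  have -> : marginal (PLeaf c f) = 1.
    have [_ [_ /= [f1]]] := dens X [::].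
    by rewrite /marginal /= qchan_qrest yvals_qrest.
  by apply: integrates_to_cast (dens X ts); rewrite size_map.
split.
  set ts := [seq q.1 | q <- qchan (qrest Q c) d].
  have sy : size (yvals (qrest Q c) ymc d) == size ts.
    by rewrite size_yvals // size_map.
  exact: (dens X ts).1 (Tuple sy).
by move=> yc; rewrite /joint /marginal /= qchan_qrest_neq // yvals_ymerge_neq.
Qed.

Lemma integrates_to_PSum ch :
  (forall wk, List.In wk ch -> 0 <= wk.1 X /\ integrates_to (joint wk.2) (marginal wk.2)) ->
  integrates_to (joint (PSum ch)) (marginal (PSum ch)).
Proof.
elim: ch => [|[w k] ch IHch] ich; first exact: integrates_to0.
have [w0 ik] := ich (w, k) (or_introl erefl).
exact: integrates_toD w0 ik (IHch (fun wk h => ich wk (or_intror h))).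
Qed.

Lemma ignores_channel_PSum ch :
  (forall wk, List.In wk ch -> 0 <= wk.1 X /\ ignores_channel wk.2) ->
  ignores_channel (PSum ch).
Proof.
elim: ch => [|[w k] ch IHch] ich; first by split.
have [w0 [mk0 jk]] := ich (w, k) (or_introl erefl).
have [ms0 js] := IHch (fun wk h => ich wk (or_intror h)).
split; first by apply: addr_ge0 => //; exact: mulr_ge0.
by move=> yc; rewrite -[LHS]/(w X * joint k yc + joint (PSum ch) yc) jk js.
Qed.

Lemma marginalizes_PSum ch :
  (forall wk, List.In wk ch -> 0 <= wk.1 X) ->
  (forall k1 k2, List.In k1 (map snd ch) -> List.In k2 (map snd ch) -> scope k1 = scope k2) ->
  (forall wk, List.In wk ch -> marginalizes wk.2) ->
  marginalizes (PSum ch).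
Proof.
move=> w0 same_scope mch; rewrite /marginalizes.
have [/scope_PSumP[wk0 in0 c0]|cNs] := boolP (c \in scope (PSum ch)).
  apply: integrates_to_PSum => wk inwk; split; first exact: w0.
  have := mch wk inwk.
  by rewrite /marginalizes (same_scope wk.2 wk0.2) ?c0 //; exact: List.in_map.
apply: ignores_channel_PSum => wk inwk; split; first exact: w0.
have := mch wk inwk; rewrite /marginalizes ifF //; apply/negbTE.
by apply: contra cNs => cwk; apply/scope_PSumP; exists wk.
Qed.

Lemma marginalizes_PProd_cons k l : [disjoint scope k & scope (PProd l)] ->
  marginalizes k -> marginalizes (PProd l) -> marginalizes (PProd (k :: l)).
Proof.
move=> dis; rewrite /marginalizes.
have -> : scope (PProd (k :: l)) = scope k :|: scope (PProd l) by [].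
have -> : marginal (PProd (k :: l)) = marginal k * marginal (PProd l) by [].
have jE yc : joint (PProd (k :: l)) yc = joint k yc * joint (PProd l) yc by [].
rewrite finset.in_setU; have [ck|cNk] := boolP (c \in scope k) => mk.
  rewrite (disjointFr dis ck) => -[ml0 jl].
  have -> : joint (PProd (k :: l)) = fun yc => joint k yc * marginal (PProd l).
    by apply: funext => yc; rewrite jE jl.
  exact: integrates_toMr.
case: mk => mk0 jk; have [cl|cNl] := boolP (c \in scope (PProd l)) => ml.
  have -> : joint (PProd (k :: l)) = fun yc => marginal k * joint (PProd l) yc.
    by apply: funext => yc; rewrite jE jk.
  exact: integrates_toMl.
case: ml => ml0 jl; split=> [|yc]; first exact: mulr_ge0.
by rewrite jE jk jl.
Qed.

Lemma marginalizes_PProd ch :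
  (forall i j k1 k2, i <> j -> List.nth_error ch i = Some k1 ->
     List.nth_error ch j = Some k2 -> [disjoint scope k1 & scope k2]) ->
  (forall k, List.In k ch -> marginalizes k) ->
  marginalizes (PProd ch).
Proof.
elim: ch => [|k ch IHch] dis mch.
  by rewrite /marginalizes inE; split; [exact: ler01 | by []].
apply: marginalizes_PProd_cons; last 2 first.
- exact: mch (or_introl erefl).
- apply: IHch => [i j k1 k2 ij|k' ink']; last exact: mch (or_intror ink').
  exact: dis i.+1 j.+1 k1 k2 (fun e => ij (succn_inj e)).
rewrite finset.disjoints_subset; apply/fintype.subsetP => x xk; rewrite finset.inE.
apply/scope_PProdP => -[k' ink' xk'].
have [j jk'] := List.In_nth_error _ _ ink'.
have dkk' : [disjoint scope k & scope k'] by apply: (dis 0 j.+1).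
by rewrite (disjointFr dkk' xk) in xk'.
Qed.

Lemma marginalizes_circuit n : smooth n -> decomposable n ->
  leaves_are_densities n -> sum_weights_valid n -> marginalizes n.
Proof.
elim/(@pc_nested_ind R C): n => [d f|ch IH|ch IH] sm dec dens wts.
- exact: marginalizes_leaf.
- move/all_nodes_PSum: sm => [same_scope smc]; move/all_nodes_PSum: dec => [_ decc].
  move/all_nodes_PSum: dens => [_ densc]; move/all_nodes_PSum: wts => [wts_ch wtsc].
  apply: marginalizes_PSum => [wk /(wts_ch X).1 //|//|wk inwk].
  by apply: IH; [| exact: smc | exact: decc | exact: densc | exact: wtsc].
- move/all_nodes_PProd: sm => [_ smc]; move/all_nodes_PProd: dec => [disj decc].
  move/all_nodes_PProd: dens => [_ densc]; move/all_nodes_PProd: wts => [_ wtsc].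
  apply: marginalizes_PProd => // k ink.
  by apply: IH; [| exact: smc | exact: decc | exact: densc | exact: wtsc].
Qed.

End Marginalization.

Theorem lemmaA1 (R : realType) (C : nat) (p : pc R C)
  (Hsmooth : smooth p) (Hdec : decomposable p)
  (Hleaves : leaves_are_densities p) (Hweights : sum_weights_valid p)
  (Hroot : forall c : 'I_C, c \in scope p) :
  forall (X : obs R C) (Q : query R C) (c : 'I_C) (ymc : seq R),
    size ymc = size (qrest Q c) ->
    iint (fun yc : (size (qchan Q c)).-tuple R =>
            (pc_eval X Q (ymerge c Q yc ymc) p)%:E)
    = (pc_eval X (qrest Q c) ymc p)%:E.
Proof.
move=> X Q c ymc size_ymc.
have := marginalizes_circuit X Q c ymc size_ymc p Hsmooth Hdec Hleaves Hweights.
by rewrite /marginalizes Hroot => -[_ []].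
Qed.
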